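(* Let ${\bm p}^t\in(0,1)^V$ be a softmax probability vector, $y\in[V]$ a ground-truth class with one-hot ${\bm y}={\bm e}_y$, $y^*=\arg\max_{j\neq y}p_j^t$, ${\bm g}^t={\bm p}^t-{\bm y}$, and ${\bm H}^t_{{\bm z}}=\mathrm{diag}({\bm p}^t)-{\bm p}^t({\bm p}^t)^\top$. Let $S=p^t_y+p^t_{y^*}$, $\tau=1-S$, $\bar p_y=p^t_y/S\in(0,1)$, and $\Delta_{\mathrm{bin}}(\bar p_y)=4\bar p_y(1-\bar p_y)^2$. Then $$\Delta^t_{y^*,y}:=({\bm H}^t_{{\bm z}}{\bm g}^t)_{y^*}-({\bm H}^t_{{\bm z}}{\bm g}^t)_y=\Delta_{\mathrm{bin}}(\bar p_y)+\zeta^t\quad\text{with}\quad |\zeta^t|\le 6\tau.$$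
   Context: ${\bm H}^t_{{\bm z}}$ and ${\bm g}^t$ are the Hessian and gradient in the logits of the softmax cross-entropy loss $-\sum_k y_k\log p_k$ at ${\bm p}^t$. *)

From HB Require Import structures.
From mathcomp Require Import all_boot all_order all_algebra.
Set Implicit Arguments. Unset Strict Implicit. Unset Printing Implicit Defensive.
Import Order.TTheory GRing.Theory Num.Theory.
Local Open Scope ring_scope.

Definition onehot (R : ringType) (V : nat) (y : 'I_V) : 'cV[R]_V :=
  \col_(i < V) (if i == y then 1 else 0).

Definition ce_grad (R : ringType) (V : nat) (p : 'cV[R]_V) (y : 'I_V) : 'cV[R]_V :=
  p - onehot R y.

Definition ce_hess (R : ringType) (V : nat) (p : 'cV[R]_V) : 'M[R]_V :=
  diag_mx p^T - p *m p^T.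

Definition Delta_gap (R : ringType) (V : nat) (p : 'cV[R]_V) (y ys : 'I_V) : R :=
  (ce_hess p *m ce_grad p y) ys 0 - (ce_hess p *m ce_grad p y) y 0.

Definition Delta_bin (R : ringType) (q : R) : R := 4 * q * (1 - q) ^+ 2.

(** Since [H v = p .* (v - <p, v> 1)], the gap [(H g)_{y*} - (H g)_y] depends on
    [p] only through [a = p_y], [b = p_{y*}] and the residual square mass
    [r = sum_{k <> y, y*} p_k^2].  Writing [a = S q] and [b = S (1 - q)], it is a
    polynomial in [S], [q], [r] which equals [Delta_bin q] at [S = 1], [r = 0];
    the deviation is [(S - 1) B - r S (1 - 2 q)] with [B = Delta_bin_slope S q]
    bounded by 5 on the unit square, and [r <= tau] because [p_k^2 <= p_k]. *)
From HB Require Import structures.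
From mathcomp Require Import all_boot all_order all_algebra.
From mathcomp Require Import ring lra.
Import Order.TTheory GRing.Theory Num.Theory.
Local Open Scope ring_scope.

Lemma bigD2 {T : finType} {M : nmodType} (F : T -> M) {i j : T} : j != i ->
  \sum_k F k = F i + F j + \sum_(k | (k != i) && (k != j)) F k.
Proof. by move=> ji; rewrite (bigD1 i) //= (bigD1 j) //= addrA. Qed.

Section HessianGradient.

Variables (R : comNzRingType) (V : nat) (p : 'cV[R]_V).

Lemma ce_hess_mulE (v : 'cV[R]_V) i :
  (ce_hess p *m v) i 0 = p i 0 * (v i 0 - \sum_k p k 0 * v k 0).
Proof.
rewrite /ce_hess mulmxBl mul_diag_mx -mulmxA !mxE big_ord1 !mxE mulrBr.
by congr (_ - _ * _); apply: eq_bigr => k _; rewrite !mxE.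
Qed.

Lemma ce_gradE y i : ce_grad p y i 0 = p i 0 - (i == y)%:R.
Proof. by rewrite !mxE; case: eqP. Qed.

Lemma sum_mul_ce_grad y :
  \sum_k p k 0 * ce_grad p y k 0 = \sum_k p k 0 ^+ 2 - p y 0.
Proof.
under eq_bigr => k _ do rewrite ce_gradE mulrBr -expr2.
rewrite sumrB; congr (_ - _).
rewrite (bigD1 y) //= eqxx mulr1 big1 ?addr0 // => k /negbTE ->.
by rewrite mulr0.
Qed.

Lemma Delta_gapE y ys : ys != y ->
  Delta_gap p y ys = p ys 0 ^+ 2 - p y 0 * (p y 0 - 1)
    - (p ys 0 - p y 0) * (\sum_k p k 0 ^+ 2 - p y 0).
Proof.
move=> ysy; rewrite /Delta_gap !ce_hess_mulE sum_mul_ce_grad !ce_gradE.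
by rewrite eqxx (negbTE ysy) /=; ring.
Qed.

End HessianGradient.

Definition Delta_bin_slope {R : nzRingType} (S q : R) : R :=
  (S + 1) * (1 + q) * (1 - 2 * q) + q
  - (S ^+ 2 + S + 1) * (q ^+ 2 + (1 - q) ^+ 2) * (1 - 2 * q).

Lemma two_class_DeltaE (R : comNzRingType) (S q r : R) :
  let a := S * q in let b := S * (1 - q) in
  b ^+ 2 - a * (a - 1) - (b - a) * (a ^+ 2 + b ^+ 2 + r - a)
  = Delta_bin q + (S - 1) * Delta_bin_slope S q - r * S * (1 - 2 * q).
Proof. by rewrite /Delta_bin /Delta_bin_slope /=; ring. Qed.

Section Bounds.

Variable R : realFieldType.

Lemma Delta_bin_slope_bound {S q : R} : 0 <= S <= 1 -> 0 <= q <= 1 ->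
  `|Delta_bin_slope S q| <= 5.
Proof.
move=> /andP[S0 S1] /andP[q0 q1].
have X04 : 0 <= (S + 1) * (1 + q) <= 4 by apply/andP; split; nra.
have Y03 : 0 <= (S ^+ 2 + S + 1) * (q ^+ 2 + (1 - q) ^+ 2) <= 3.
  have S13 : 1 <= S ^+ 2 + S + 1 <= 3 by apply/andP; split; nra.
  have m01 : 0 <= q ^+ 2 + (1 - q) ^+ 2 <= 1 by apply/andP; split; nra.
  by apply/andP; split; nra.
rewrite /Delta_bin_slope; move: X04 Y03.
move: ((S + 1) * (1 + q)) ((S ^+ 2 + S + 1) * (q ^+ 2 + (1 - q) ^+ 2)).
move=> X Y /andP[X0 X4] /andP[Y0 Y3].
by rewrite ler_norml; apply/andP; split; nra.
Qed.

Lemma two_class_Delta_approx (a b r : R) :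
  0 < a -> 0 < b -> 0 <= r <= 1 - (a + b) ->
  exists zeta : R,
    b ^+ 2 - a * (a - 1) - (b - a) * (a ^+ 2 + b ^+ 2 + r - a)
      = Delta_bin (a / (a + b)) + zeta /\ `|zeta| <= 6 * (1 - (a + b)).
Proof.
move=> a0 b0 /andP[r0 rtau]; set S := a + b; set q := a / S.
have S0 : 0 < S by rewrite /S; lra.
have aE : a = S * q by rewrite /q mulrC divfK ?gt_eqF.
have bE : b = S * (1 - q) by rewrite mulrBr mulr1 -aE /S; ring.
have S01 : 0 <= S <= 1 by apply/andP; split; lra.
have q01 : 0 <= q <= 1.
  apply/andP; split; first by rewrite divr_ge0 //; lra.
  by rewrite ler_pdivrMr // mul1r /S; lra.
have slope := Delta_bin_slope_bound S01 q01.
exists ((S - 1) * Delta_bin_slope S q - r * S * (1 - 2 * q)).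
split; first by rewrite aE bE two_class_DeltaE addrA.
have rS : `|r * S * (1 - 2 * q)| <= r.
  rewrite -mulrA normrM ger0_norm // ler_piMr // ler_norml.
  by move: S01 q01 => /andP[? ?] /andP[? ?]; apply/andP; split; nra.
have slope_tau : (1 - S) * `|Delta_bin_slope S q| <= (1 - S) * 5.
  by rewrite ler_wpM2l // subr_ge0; case/andP: S01.
apply: (le_trans (ler_normB _ _)); rewrite normrM ler0_norm; last lra.
by rewrite opprB; lra.
Qed.

End Bounds.

Theorem lemma3 (R : realFieldType) (V : nat) (p : 'cV[R]_V) (y ys : 'I_V)
  (hp : forall i, 0 < p i 0 < 1)
  (hsum : \sum_(i < V) p i 0 = 1)
  (hys : ys != y)
  (hmax : forall j, j != y -> p j 0 <= p ys 0) :
  let S := p y 0 + p ys 0 in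
  let tau := 1 - S in
  let pbar := p y 0 / S in
  exists zeta : R,
    Delta_gap p y ys = Delta_bin pbar + zeta /\ `|zeta| <= 6 * tau.
Proof.
move=> S tau pbar; rewrite /tau /pbar /S Delta_gapE // (bigD2 _ hys).
set r := \sum_(k | _) _.
have rtau : r <= 1 - (p y 0 + p ys 0).
  rewrite -hsum (bigD2 _ hys) (addrC (p y 0 + p ys 0)) addrK.
  apply: ler_sum => k _; have /andP[pk0 pk1] := hp k.
  by rewrite expr2 ler_piMr // ltW.
have r0 : 0 <= r by apply: sumr_ge0 => k _; apply: sqr_ge0.
have [pya _] := andP (hp y); have [pysb _] := andP (hp ys).
by apply: two_class_Delta_approx => //; rewrite r0 rtau.
Qed.
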